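(* Let $F_\epsilon$ be a smooth near-identity family of maps on a domain $D\subset\mathbb R^m$ which is reversible with a linear reversor $R$, i.e. $R:\mathbb R^m\to\mathbb R^m$ is linear with $R\circ R=\mathrm I$ and $F_\epsilon^{-1}=R\circ F_\epsilon\circ R$. Then the interpolating vector field $X_n$ of $F_\epsilon$ is reversible: $X_n(Rx,\epsilon)=-R\,X_n(x,\epsilon)$ (whenever both sides are defined).
   Context: For $\epsilon\neq0$ and a point $x$ whose iterates $x_k=F_\epsilon^k(x)$, $|k|\le n$, are defined (negative $k$ meaning iterates of $F_\epsilon^{-1}$), the interpolating vector field is $$X_n(x,\epsilon)=\epsilon^{-1}\sum_{k=1}^n p_{nk}\bigl(x_k-x_{-k}\bigr),\qquad p_{nk}=\frac{(-1)^{k+1}(n!)^2}{k(n+k)!(n-k)!}.$$ *)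

From HB Require Import structures.
From mathcomp Require Import all_boot all_order all_algebra.
From mathcomp Require Import reals.
Set Implicit Arguments. Unset Strict Implicit. Unset Printing Implicit Defensive.
Import Order.TTheory GRing.Theory Num.Theory.
Local Open Scope ring_scope.

(* Points of R^m are row vectors 'rV[R]_m; a linear map R^m -> R^m is a
   matrix A acting by x |-> x *m A. *)

Definition pcoef (R : realType) (n k : nat) : R :=
  (-1) ^+ k.+1 * (n`!)%:R ^+ 2 / (k%:R * ((n + k)`!)%:R * ((n - k)`!)%:R).

(* The iterates x_k = F^k x (k >= 0) and x_{-k} = (F^{-1})^k x are all
   defined for |k| <= n : each iterate used as an argument lies in the
   domain of the map being applied. *)
Definition iterates_defined (V : Type) (D Dinv : V -> Prop) (f finv : V -> V)
  (n : nat) (x : V) : Prop :=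
  forall k, (k < n)%N -> D (iter k f x) /\ Dinv (iter k finv x).

Definition interp_field (R : realType) (m : nat) (f finv : 'rV[R]_m -> 'rV[R]_m)
  (n : nat) (eps : R) (x : 'rV[R]_m) : 'rV[R]_m :=
  eps^-1 *: \sum_(1 <= k < n.+1) pcoef R n k *: (iter k f x - iter k finv x).

From HB Require Import structures.
From mathcomp Require Import all_boot all_order all_algebra.
From mathcomp Require Import reals.
Set Implicit Arguments. Unset Strict Implicit. Unset Printing Implicit Defensive.
Import Order.TTheory GRing.Theory Num.Theory.
Local Open Scope ring_scope.

(* Reversibility says that R conjugates F_eps to F_eps^{-1} and vice versa,
   so R maps the forward iterates x_k of x to the backward iterates of R x and
   conversely: (R x)_k = R x_{-k}.  Hence R swaps the two terms of every
   difference x_k - x_{-k} in X_n, which changes its sign. *)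

Lemma iter_conj_in (V : Type) (P : V -> Prop) (f g h : V -> V)
    (k : nat) (x : V) :
  (forall y, P y -> f (h y) = h (g y)) ->
  (forall j, (j < k)%N -> P (iter j g x)) ->
  iter k f (h x) = h (iter k g x).
Proof.
move=> fhg; elim: k => [|k IHk] Pg //=.
rewrite IHk => [|j jk]; last exact/Pg/ltnW.
exact/fhg/Pg.
Qed.

Lemma interp_field_antiswap (R : realType) (m : nat)
    (f g : 'rV[R]_m -> 'rV[R]_m) (A : 'M[R]_m) (n : nat) (eps : R)
    (x : 'rV[R]_m) :
  (forall k, (k <= n)%N -> iter k f (x *m A) = iter k g x *m A) ->
  (forall k, (k <= n)%N -> iter k g (x *m A) = iter k f x *m A) ->
  interp_field f g n eps (x *m A) = - (interp_field f g n eps x *m A).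
Proof.
move=> fA gA; rewrite /interp_field -scalemxAl -scalerN; congr (_ *: _).
rewrite mulmx_suml -sumrN; apply: eq_big_nat => k /andP[_ kn].
by rewrite fA // gA // -scalemxAl -scalerN mulmxBl opprB.
Qed.

Section Reversor.

Variables (R : realType) (m : nat) (D : 'rV[R]_m -> Prop).
Variables (f g : 'rV[R]_m -> 'rV[R]_m) (Rm : 'M[R]_m).

Let image y := exists2 z, D z & f z = y.

Hypothesis RmK : Rm *m Rm = 1%:M.
Hypothesis image_reversed : forall y, image y <-> D (y *m Rm).
Hypothesis inv_reversed : forall y, image y -> g y = f (y *m Rm) *m Rm.

Lemma reversorK (y : 'rV[R]_m) : y *m Rm *m Rm = y.
Proof. by rewrite -mulmxA RmK mulmx1. Qed.

Lemma map_reversed (y : 'rV[R]_m) : image y -> f (y *m Rm) = g y *m Rm.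
Proof. by move=> Iy; rewrite inv_reversed // reversorK. Qed.

Lemma inv_map_reversed (y : 'rV[R]_m) : D y -> g (y *m Rm) = f y *m Rm.
Proof.
move=> Dy; rewrite inv_reversed ?reversorK //.
by apply/image_reversed; rewrite reversorK.
Qed.

Lemma iter_map_reversed (n k : nat) (x : 'rV[R]_m) :
  iterates_defined D image f g n x -> (k <= n)%N ->
  iter k f (x *m Rm) = iter k g x *m Rm.
Proof.
move=> defx kn; apply: (iter_conj_in (P := image) (h := mulmxr Rm)) => [y|j jk].
  exact: map_reversed.
by case: (defx j (leq_trans jk kn)).
Qed.

Lemma iter_inv_map_reversed (n k : nat) (x : 'rV[R]_m) :
  iterates_defined D image f g n x -> (k <= n)%N ->
  iter k g (x *m Rm) = iter k f x *m Rm.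
Proof.
move=> defx kn; apply: (iter_conj_in (P := D) (h := mulmxr Rm)) => [y|j jk].
  exact: inv_map_reversed.
by case: (defx j (leq_trans jk kn)).
Qed.

End Reversor.

Theorem mainTheorem6 (R : realType) (m : nat) (D : 'rV[R]_m -> Prop)
  (E : R -> Prop) (F Finv : R -> 'rV[R]_m -> 'rV[R]_m) (Rm : 'M[R]_m)
  (* Finv eps is the inverse of F eps : D -> F eps (D) *)
  (hinv1 : forall eps x, E eps -> D x -> Finv eps (F eps x) = x)
  (hinv2 : forall eps y, E eps -> (exists2 x, D x & F eps x = y) ->
             D (Finv eps y) /\ F eps (Finv eps y) = y)
  (* R is an involution *)
  (hRR : Rm *m Rm = 1%:M)
  (* reversibility F_eps^{-1} = R o F_eps o R, as partial maps: equal domains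
     and equal values *)
  (hrevdom : forall eps y, E eps ->
     ((exists2 x, D x & F eps x = y) <-> D (y *m Rm)))
  (hrev : forall eps y, E eps -> (exists2 x, D x & F eps x = y) ->
     Finv eps y = F eps (y *m Rm) *m Rm)
  (n : nat) (eps : R) (x : 'rV[R]_m) :
  E eps -> eps != 0 ->
  iterates_defined D (fun y => exists2 z, D z & F eps z = y)
    (F eps) (Finv eps) n x ->
  iterates_defined D (fun y => exists2 z, D z & F eps z = y)
    (F eps) (Finv eps) n (x *m Rm) ->
  interp_field (F eps) (Finv eps) n eps (x *m Rm)
    = - (interp_field (F eps) (Finv eps) n eps x *m Rm).
Proof.
move=> Eeps _ defx _.
have imR y := hrevdom eps y Eeps; have invR y := hrev eps y Eeps.
apply: interp_field_antiswap => k kn.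
- exact: (iter_map_reversed hRR invR defx kn).
- exact: (iter_inv_map_reversed hRR imR invR defx kn).
Qed.
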